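(* Fix a cell with no source term ($S=0$) and total energy $E=1$, a positive integer $N_{obj}$, $w_{obj}=1/N_{obj}$, and an initial population $X_0$ of $N_0\le N_{obj}$ particles with positive weights summing to $1$. Apply repeatedly the cell-based population control step with conservative splitting described in the context, and let $X_l=(X_l^1,\dots,X_l^{N_l})$ be the (positive) weights after $l$ iterations. Then: (1) for every $l\ge1$, $\dfrac{\max_j\{X_l^j: X_l^j\neq0\}}{\min_j\{X_l^j: X_l^j\neq0\}}\le4$; (2) for every $l\ge0$, $N_l\le 6N_{obj}$; (3) for every $l\ge1$, $\min_j\{X_l^j: X_l^j\neq0\}\ge w_{obj}/10$.
   Context: Cell-based population control step for a single cell with existing particle weights $w_1,\dots,w_N$, $E=\sum_pw_p$, source $S\ge0$, target number $N_{obj}\ge1$ and $E+S>0$: set $w_{obj}=(E+S)/N_{obj}$; if $S>0$ emit $N^{vol}=\max(1,\lfloor S/w_{obj}\rfloor)$ particles of weight $S/N^{vol}$. If $E>0$, for each existing particle draw independently $u_p\sim\mathcal U(0,1)$, $I_p=\lfloor w_p/w_{obj}\rfloor$, $R_p=w_p/w_{obj}-I_p$; if $I_p=0$ (Russian Roulette) the particle is killed if $R_p<u_p$, otherwise its weight becomes $w_{obj}$; if $I_p\ge1$ (conservative Splitting) it is replaced by $N^{split}_p=I_p+\mathbf 1_{\{u_p<R_p\}}$ copies each of weight $w_p/N^{split}_p$. Then all weights are multiplied by a common factor so that the total is $E+S$. Non-void correction: if $S=0$ and no particle remains, the population becomes one particle of weight $E$. Successive iterations use fresh independent uniform variables. 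*)

From mathcomp Require Import all_boot all_order all_algebra.
From mathcomp Require Import reals.
Set Implicit Arguments. Unset Strict Implicit. Unset Printing Implicit Defensive.
Import Order.TTheory GRing.Theory Num.Theory.
Local Open Scope ring_scope.

Section PC.
Variable R : realType.

(* Treatment of one existing particle of weight w, with uniform draw u,
   target weight wobj: Russian roulette if I = 0, conservative splitting
   otherwise. *)
Definition process_particle (wobj w u : R) : seq R :=
  let x := w / wobj in
  let I := Num.floor x in
  let Rp := x - I%:~R in
  if I == 0 then (if Rp < u then [::] else [:: wobj])
  else let nsplit := (absz I + (u < Rp)%R)%N in
       nseq nsplit (w / nsplit%:R).

(* One cell-based population control step.  ws = existing weights,
   S = source, Nobj = target number, u p = uniform draw for particle p. *)
Definition pc_step (Nobj : nat) (S : R) (ws : seq R) (u : nat -> R) : seq R :=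
  let E := \sum_(w <- ws) w in
  let wobj := (E + S) / Nobj%:R in
  let Nvol := maxn 1 (absz (Num.floor (S / wobj))) in
  let src := if 0 < S then nseq Nvol (S / Nvol%:R) else [::] in
  let ex := if 0 < E then
              flatten [seq process_particle wobj (nth 0 ws p) (u p)
                      | p <- iota 0 (size ws)]
            else [::] in
  let pre := src ++ ex in
  if (S == 0) && (pre == [::]) then [:: E]
  else let T := \sum_(w <- pre) w in [seq w * ((E + S) / T) | w <- pre].

(* Population after l iterations with S = 0; u l p is the uniform draw used
   for particle p at iteration l+1. *)
Fixpoint population (Nobj : nat) (X0 : seq R) (u : nat -> nat -> R) (l : nat)
  : seq R :=
  match l with
  | 0 => X0
  | l'.+1 => pc_step Nobj 0 (population Nobj X0 u l') (u l')
  end.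

End PC.

(* A particle of weight w >= w_obj is split into n copies with n w_obj within a
   factor 2 of w, and a lighter one is either killed or set to w_obj; so every
   weight produced before renormalization lies in (w_obj/2, 2 w_obj), which gives
   the ratio bound 4.  Splitting w yields at most 1 + 2 w / w_obj copies, hence a
   step adds at most 2 N_obj particles, and the produced mass is at most
   1 + N w_obj.  A population with this ratio property either has all weights
   below w_obj, and then the next step is pure roulette (the size does not grow
   and all produced weights equal w_obj), or has at most 4 N_obj particles.  This
   dichotomy is preserved, and yields N <= 6 N_obj and the lower bound
   (w_obj/2) / (1 + 4) = w_obj / 10. *)

From mathcomp Require Import all_boot all_order all_algebra.
From mathcomp Require Import reals.
From mathcomp Require Import ring lra.
Set Implicit Arguments. Unset Strict Implicit. Unset Printing Implicit Defensive.
Import Order.TTheory GRing.Theory Num.Theory.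
Local Open Scope ring_scope.

Section ProcessParticle.
Variables (R : realType) (wobj w u : R).

Lemma process_particle_roulette : 0 < wobj -> 0 < w -> w < wobj ->
  process_particle wobj w u = if w / wobj < u then [::] else [:: wobj].
Proof.
move=> wobj_gt0 w_gt0 w_lt; rewrite /process_particle.
have x_ge0 : 0 <= w / wobj by rewrite divr_ge0 ?ltW.
have x_lt1 : w / wobj < 1 by rewrite ltr_pdivrMr // mul1r.
by rewrite (@floor_def _ _ 0) ?eqxx ?subr0 // add0r x_ge0 x_lt1.
Qed.

Lemma process_particle_split : 0 < wobj -> 0 < u -> wobj <= w ->
  exists2 n : nat, process_particle wobj w u = nseq n (w / n%:R)
                 & w < 2 * (n%:R * wobj) < 4 * w.
Proof.
move=> wobj_gt0 u_gt0 w_ge; rewrite /process_particle.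
set x := w / wobj; set I := Num.floor x.
have w_eq : w = x * wobj by rewrite /x divfK ?gt_eqF.
have x_ge1 : 1 <= x by rewrite /x ler_pdivlMr // mul1r.
have I_le : I%:~R <= x := floor_le x.
have I_gt : x < I%:~R + 1 by rewrite -[1]/(1%:~R) -intrD floorD1_gt.
have I_ge1 : 1 <= I by rewrite floor_ge_int.
rewrite gt_eqF ?(lt_le_trans ltr01) //.
set n := (`|I| + _)%N; exists n => //.
have I_nat : (`|I|%N)%:R = I%:~R :> R by rewrite natr_absz gtr0_norm.
have Ir_ge1 : 1 <= I%:~R :> R by rewrite ler1z.
have n_bounds : x < 2 * n%:R < 4 * x.
  rewrite /n natrD I_nat; case: (boolP (u < _)) => /= draw.
    have I_lt : I%:~R < x by rewrite -subr_gt0 (lt_trans u_gt0 draw).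
    by rewrite mulr1n; apply/andP; split; lra.
  by rewrite addr0; apply/andP; split; lra.
by rewrite w_eq mulrA [4 * _]mulrA !ltr_pM2r.
Qed.

Lemma mem_process_particle (y : R) : 0 < wobj -> 0 < w -> 0 < u ->
  y \in process_particle wobj w u -> wobj < 2 * y < 4 * wobj.
Proof.
move=> wobj_gt0 w_gt0 u_gt0.
have [w_lt|w_ge] := ltrP w wobj.
  rewrite process_particle_roulette //; case: ifP => // _.
  by rewrite inE => /eqP ->; apply/andP; split; lra.
have [n -> /andP[n_gt n_lt]] := process_particle_split wobj_gt0 u_gt0 w_ge.
have n_gt0 : 0 < n%:R :> R by rewrite -(pmulr_lgt0 _ wobj_gt0); lra.
move=> /nseqP[-> _]; rewrite mulrA ltr_pdivlMr // ltr_pdivrMr //.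
by apply/andP; split; nra.
Qed.

Lemma size_process_particle : 0 < wobj -> 0 < w -> 0 < u ->
  (size (process_particle wobj w u))%:R * wobj <= wobj + 2 * w.
Proof.
move=> wobj_gt0 w_gt0 u_gt0.
have [w_lt|w_ge] := ltrP w wobj.
  by rewrite process_particle_roulette //; case: ifP => _ /=; lra.
have [n -> /andP[_ n_lt]] := process_particle_split wobj_gt0 u_gt0 w_ge.
by rewrite size_nseq; lra.
Qed.

Lemma sum_process_particle : 0 < wobj -> 0 < w -> 0 < u ->
  \sum_(y <- process_particle wobj w u) y <= w + wobj.
Proof.
move=> wobj_gt0 w_gt0 u_gt0.
have [w_lt|w_ge] := ltrP w wobj.
  rewrite process_particle_roulette //; case: ifP => _.
    by rewrite big_nil; lra.
  by rewrite big_seq1; lra.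
have [n -> /andP[n_gt _]] := process_particle_split wobj_gt0 u_gt0 w_ge.
have n_gt0 : 0 < n%:R :> R by rewrite -(pmulr_lgt0 _ wobj_gt0); lra.
rewrite big_nseq iter_addr_0 -[w / n%:R *+ n]mulr_natr.
by rewrite divfK ?gt_eqF //; lra.
Qed.

End ProcessParticle.

Section Weights.
Variable R : realType.

Lemma sumr_const_seq (T : Type) (s : seq T) (c : R) :
  \sum_(i <- s) c = (size s)%:R * c.
Proof. by rewrite big_const_seq count_predT iter_addr_0 mulr_natl. Qed.

Lemma sumr_seq_gt0 (F : seq R) :
  F != [::] -> {in F, forall w, 0 < w} -> 0 < \sum_(w <- F) w.
Proof.
case: F => [|a s] // _ F_gt0; rewrite big_cons.
have a_gt0 : 0 < a by rewrite F_gt0 ?mem_head.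
have s_ge0 : 0 <= \sum_(v <- s) v.
  by rewrite big_seq sumr_ge0 // => v v_s; rewrite ltW // F_gt0 // inE v_s orbT.
lra.
Qed.

Definition normalize (F : seq R) : seq R :=
  if F == [::] then [:: 1] else [seq w / \sum_(v <- F) v | w <- F].

Lemma size_normalize (F : seq R) : size (normalize F) = maxn 1 (size F).
Proof. by case: F => [|a s] //; rewrite /normalize size_map (maxn_idPr _). Qed.

Lemma normalize_gt0 (F : seq R) :
  {in F, forall w, 0 < w} -> {in normalize F, forall y, 0 < y}.
Proof.
rewrite /normalize; case: eqP => [_ _ y|/eqP F_neq0 F_gt0 y].
  by rewrite inE => /eqP ->.
by move=> /mapP[w w_F ->]; apply: divr_gt0; [exact: F_gt0 | exact: sumr_seq_gt0].
Qed.

Lemma sum_normalize (F : seq R) :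
  {in F, forall w, 0 < w} -> \sum_(y <- normalize F) y = 1.
Proof.
rewrite /normalize; case: eqP => [_ _|/eqP F_neq0 F_gt0]; first by rewrite big_seq1.
by rewrite big_map -mulr_suml divff // gt_eqF ?sumr_seq_gt0.
Qed.

Lemma normalize_ge (c B : R) (F : seq R) :
  0 < c -> c <= B -> {in F, forall w, c <= w} -> \sum_(w <- F) w <= B ->
  {in normalize F, forall y, c / B <= y}.
Proof.
move=> c_gt0 c_le_B F_ge sum_le y; have B_gt0 : 0 < B by lra.
rewrite /normalize; case: eqP => [_|/eqP F_neq0].
  by rewrite inE => /eqP ->; rewrite ler_pdivrMr // mul1r.
have F_gt0 : {in F, forall w, 0 < w} by move=> w /F_ge; lra.
have T_gt0 := sumr_seq_gt0 F_neq0 F_gt0.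
move=> /mapP[w /F_ge c_le_w ->].
rewrite ler_pdivrMr // mulrAC ler_pdivlMr //; nra.
Qed.

Definition balanced (a : R) (ws : seq R) :=
  exists2 t : R, 0 < t & {in ws, forall w, a < t * w < 4 * a}.

Lemma normalize_balanced (a : R) (F : seq R) :
  0 < a -> {in F, forall w, a < 2 * w < 4 * a} -> balanced a (normalize F).
Proof.
move=> a_gt0 F_bd; rewrite /normalize; case: eqP => [_|/eqP F_neq0].
  exists (2 * a) => [|y]; first lra.
  by rewrite inE => /eqP ->; rewrite mulr1; apply/andP; split; lra.
have F_gt0 : {in F, forall w, 0 < w} by move=> w /F_bd/andP[+ _]; lra.
have T_gt0 := sumr_seq_gt0 F_neq0 F_gt0.
exists (2 * \sum_(v <- F) v) => [|y /mapP[w w_F ->]]; first by rewrite mulr_gt0.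
by rewrite mulrAC -mulrA divfK ?gt_eqF // F_bd.
Qed.

Lemma balanced_ratio (a : R) (ws : seq R) :
  0 < a -> balanced a ws -> {in ws &, forall x y, x / y <= 4}.
Proof.
move=> a_gt0 [t t_gt0 ws_bd] x y /ws_bd/andP[_ tx_lt] /ws_bd/andP[ty_gt _].
have y_gt0 : 0 < y by rewrite -(pmulr_rgt0 _ t_gt0); lra.
rewrite ler_pdivrMr //; nra.
Qed.

Lemma balanced_small_or_few (a : R) (ws : seq R) :
  0 < a -> balanced a ws -> {in ws, forall w, 0 < w} -> \sum_(w <- ws) w = 1 ->
  {in ws, forall w, w < a} \/ (size ws)%:R * a <= 4.
Proof.
move=> a_gt0 [t t_gt0 ws_bd] ws_gt0 ws_sum.
have [t_ge4|t_lt4] := lerP 4 t.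
  left=> w w_ws; have w_gt0 := ws_gt0 w w_ws.
  by move/ws_bd/andP: w_ws => [_ tw_lt]; nra.
right; suff : (size ws)%:R * a <= t by lra.
rewrite -sumr_const_seq -[t]mulr1 -ws_sum mulr_sumr !big_seq.
by apply: ler_sum => w /ws_bd/andP[/ltW].
Qed.

End Weights.

Section TargetWeight.
Variables (R : realType) (Nobj : nat).
Hypothesis Nobj_gt0 : (0 < Nobj)%N.
Local Notation wobj := (1 / Nobj%:R : R).

Lemma wobj_gt0 : 0 < wobj.
Proof. by rewrite divr_gt0 ?ltr0n. Qed.

Lemma wobj_le1 : wobj <= 1.
Proof. by rewrite ler_pdivrMr ?ltr0n // mul1r ler1n. Qed.

Lemma natrM_invK (k : nat) : (k * Nobj)%:R * wobj = k%:R.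
Proof. by rewrite natrM mul1r mulfK // pnatr_eq0 -lt0n. Qed.

End TargetWeight.

Section Candidates.
Variables (R : realType) (Nobj : nat) (ws : seq R) (u : nat -> R).
Local Notation wobj := (1 / Nobj%:R : R).

Definition candidates : seq R :=
  flatten [seq process_particle wobj ws`_p (u p) | p <- iota 0 (size ws)].

Lemma candidatesP (y : R) : y \in candidates ->
  exists2 p, (p < size ws)%N & y \in process_particle wobj ws`_p (u p).
Proof.
move=> /flattenP[s /mapP[p]]; rewrite mem_iota add0n => /andP[_ p_lt] -> y_s.
by exists p.
Qed.

Lemma sum_candidates_le (h g : R -> R) : (forall p, 0 < u p) ->
  (forall w v, w \in ws -> 0 < v -> \sum_(y <- process_particle wobj w v) h y <= g w) ->
  \sum_(y <- candidates) h y <= \sum_(w <- ws) g w.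
Proof.
move=> u_gt0 hg; rewrite big_flatten big_map.
rewrite [X in _ <= X](big_nth 0) /index_iota subn0.
rewrite !big_seq; apply: ler_sum => p; rewrite mem_iota add0n => /andP[_ p_lt].
exact/hg/u_gt0/mem_nth.
Qed.

Hypotheses (Nobj_gt0 : (0 < Nobj)%N) (u_gt0 : forall p, 0 < u p)
           (ws_gt0 : {in ws, forall w, 0 < w}).

Lemma mem_candidates (y : R) : y \in candidates -> wobj < 2 * y < 4 * wobj.
Proof.
move=> /candidatesP[p p_lt]; apply: mem_process_particle => //.
  exact: (wobj_gt0 R Nobj_gt0).
exact/ws_gt0/mem_nth.
Qed.

Lemma size_candidates :
  \sum_(w <- ws) w = 1 -> (size candidates <= size ws + 2 * Nobj)%N.
Proof.
move=> ws_sum.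
have : \sum_(y <- candidates) wobj <= \sum_(w <- ws) (wobj + 2 * w).
  apply: sum_candidates_le => // w v w_ws v_gt0; rewrite sumr_const_seq.
  by apply: size_process_particle => //; [exact: (wobj_gt0 R Nobj_gt0) | exact: ws_gt0].
rewrite big_split /= !sumr_const_seq -mulr_sumr ws_sum mulr1 -(natrM_invK R Nobj_gt0 2).
by rewrite -mulrDl -natrD ler_pM2r ?(wobj_gt0 R Nobj_gt0) // ler_nat.
Qed.

Lemma sum_candidates :
  \sum_(w <- ws) w = 1 -> \sum_(y <- candidates) y <= 1 + (size ws)%:R * wobj.
Proof.
move=> ws_sum.
have : \sum_(y <- candidates) y <= \sum_(w <- ws) (w + wobj).
  apply: sum_candidates_le => // w v w_ws v_gt0.
  by apply: sum_process_particle => //; [exact: (wobj_gt0 R Nobj_gt0) | exact: ws_gt0].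
by rewrite big_split /= ws_sum sumr_const_seq.
Qed.

Lemma candidates_roulette : {in ws, forall w, w < wobj} ->
  (size candidates <= size ws)%N /\ {in candidates, forall y, y = wobj}.
Proof.
move=> ws_lt; split.
  rewrite -(ler_nat R) -[_%:R]mulr1 -[X in _ <= X]mulr1 -!sumr_const_seq.
  apply: sum_candidates_le => // w v w_ws v_gt0.
  rewrite process_particle_roulette ?(wobj_gt0 R Nobj_gt0) ?ws_gt0 ?ws_lt //.
  by case: ifP; rewrite ?big_nil ?big_seq1 ?ler01.
move=> y /candidatesP[p p_lt].
rewrite process_particle_roulette ?(wobj_gt0 R Nobj_gt0) ?ws_gt0 ?ws_lt ?mem_nth //.
by case: ifP => // _; rewrite inE => /eqP.
Qed.

End Candidates.

Section PopulationControl.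
Variables (R : realType) (Nobj : nat).
Hypothesis Nobj_gt0 : (0 < Nobj)%N.
Local Notation wobj := (1 / Nobj%:R : R).

Lemma pc_step_unit_mass (ws : seq R) (u : nat -> R) :
  \sum_(w <- ws) w = 1 -> pc_step Nobj 0 ws u = normalize (candidates Nobj ws u).
Proof.
move=> ws_sum; rewrite /pc_step ws_sum addr0 ltxx ltr01 eqxx /= /normalize.
by case: eqP => // _; apply: eq_map => w; rewrite mul1r.
Qed.

Lemma pc_step_balanced (ws : seq R) (u : nat -> R) :
  (forall p, 0 < u p) -> {in ws, forall w, 0 < w} -> \sum_(w <- ws) w = 1 ->
  balanced wobj (pc_step Nobj 0 ws u).
Proof.
move=> u_gt0 ws_gt0 ws_sum; rewrite pc_step_unit_mass //.
by apply: normalize_balanced; [exact: (wobj_gt0 R Nobj_gt0) | exact: mem_candidates].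
Qed.

Definition controlled (X : seq R) : Prop :=
  [/\ {in X, forall w, 0 < w}, \sum_(w <- X) w = 1, (size X <= 6 * Nobj)%N
    & {in X, forall w, w < wobj} \/ (size X <= 4 * Nobj)%N].

Lemma controlled_pc_step (X : seq R) (u : nat -> R) :
  (forall p, 0 < u p) -> controlled X -> controlled (pc_step Nobj 0 X u).
Proof.
move=> u_gt0 [X_gt0 X_sum X_size X_regime].
have wobj_gt0 : 0 < wobj := wobj_gt0 R Nobj_gt0.
have C_gt0 : {in candidates Nobj X u, forall y, 0 < y}.
  by move=> y /mem_candidates/andP[] // + _; lra.
have Y_bal := pc_step_balanced u_gt0 X_gt0 X_sum.
rewrite pc_step_unit_mass // in Y_bal *.
have Y_gt0 := normalize_gt0 C_gt0; have Y_sum := sum_normalize C_gt0.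
split => //.
  rewrite size_normalize geq_max muln_gt0 Nobj_gt0 /=.
  case: X_regime => [X_lt | X_few].
    have [C_size _] := candidates_roulette Nobj_gt0 u_gt0 X_gt0 X_lt.
    exact: leq_trans C_size X_size.
  apply: leq_trans (size_candidates Nobj_gt0 u_gt0 X_gt0 X_sum) _.
  by rewrite (mulnDl 4 2) leq_add2r.
case: (balanced_small_or_few wobj_gt0 Y_bal Y_gt0 Y_sum) => [|Y_few]; [by left | right].
by move: Y_few; rewrite -(natrM_invK R Nobj_gt0 4) ler_pM2r // ler_nat.
Qed.

Lemma pc_step_ge (X : seq R) (u : nat -> R) :
  (forall p, 0 < u p) -> controlled X ->
  {in pc_step Nobj 0 X u, forall y, wobj / 10 <= y}.
Proof.
move=> u_gt0 [X_gt0 X_sum X_size X_regime] y; rewrite pc_step_unit_mass //.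
have wobj_gt0 : 0 < wobj := wobj_gt0 R Nobj_gt0.
have wobj_le1 : wobj <= 1 := wobj_le1 R Nobj_gt0.
have C_sum := sum_candidates Nobj_gt0 u_gt0 X_gt0 X_sum.
set n := (size X)%:R * wobj in C_sum.
have n_ge0 : 0 <= n by rewrite mulr_ge0 ?ler0n ?ltW.
case: X_regime => [X_lt | X_few].
  have [_ C_eq] := candidates_roulette Nobj_gt0 u_gt0 X_gt0 X_lt.
  have n_le : n <= 6 by rewrite /n -(natrM_invK R Nobj_gt0 6) ler_pM2r // ler_nat.
  have C_ge : {in candidates Nobj X u, forall w, wobj <= w} by move=> w /C_eq ->.
  have c_le : wobj <= 1 + n by lra.
  move=> /(normalize_ge wobj_gt0 c_le C_ge C_sum); apply: le_trans.
  by rewrite ler_pM2l // lef_pV2 ?posrE; lra.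
have n_le : n <= 4 by rewrite /n -(natrM_invK R Nobj_gt0 4) ler_pM2r // ler_nat.
have C_ge : {in candidates Nobj X u, forall w, wobj / 2 <= w}.
  by move=> w /mem_candidates/andP[] // + _; lra.
have c_gt0 : 0 < wobj / 2 by lra.
have c_le : wobj / 2 <= 1 + n by lra.
move=> /(normalize_ge c_gt0 c_le C_ge C_sum); apply: le_trans.
by rewrite -mulrA ler_pM2l // -invfM lef_pV2 ?posrE; lra.
Qed.

Lemma controlled_population (X0 : seq R) (u : nat -> nat -> R) :
  (size X0 <= Nobj)%N -> {in X0, forall x, 0 < x} -> \sum_(x <- X0) x = 1 ->
  (forall l p, 0 < u l p) -> forall l, controlled (population Nobj X0 u l).
Proof.
move=> X0_size X0_gt0 X0_sum u_gt0; elim => [|l IH]; last exact: controlled_pc_step.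
by split=> //; [|right]; rewrite (leq_trans X0_size) ?leq_pmull.
Qed.

End PopulationControl.

Theorem lemma5 (R : realType) (Nobj : nat) (X0 : seq R) (u : nat -> nat -> R) :
  (0 < Nobj)%N ->
  (size X0 <= Nobj)%N ->
  (forall x, x \in X0 -> 0 < x) ->
  \sum_(x <- X0) x = 1 ->
  (forall l p, 0 < u l p < 1) ->
  [/\ (forall l, (1 <= l)%N -> forall x y,
          x \in population Nobj X0 u l -> y \in population Nobj X0 u l ->
          x != 0 -> y != 0 -> x / y <= 4),
      (forall l, (size (population Nobj X0 u l) <= 6 * Nobj)%N) &
      (forall l, (1 <= l)%N -> forall x,
          x \in population Nobj X0 u l -> x != 0 ->
          (1 / Nobj%:R) / 10 <= x)].
Proof.
move=> Nobj_gt0 X0_size X0_gt0 X0_sum u_bounds.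
have u_gt0 l p : 0 < u l p by case/andP: (u_bounds l p).
have ctrl := controlled_population Nobj_gt0 X0_size X0_gt0 X0_sum u_gt0.
split=> [[|l] // _ x y x_in y_in _ _ | l | [|l] // _ x x_in _].
- have [X_gt0 X_sum _ _] := ctrl l.
  have Y_bal := pc_step_balanced Nobj_gt0 (u_gt0 l) X_gt0 X_sum.
  exact: (balanced_ratio (wobj_gt0 R Nobj_gt0) Y_bal x_in y_in).
- by have [] := ctrl l.
- exact: (pc_step_ge Nobj_gt0 (u_gt0 l) (ctrl l)).
Qed.
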